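(* Let $S^2_{\geq 0}=\{(x,y,z)\in\mathbb{R}^3 : x^2+y^2+z^2=1,\ z\geq 0\}$ be the closed upper unit hemisphere. For any four points $P_1,P_2,P_3,P_4\in S^2_{\geq 0}$, $$\sum_{1\leq i<j\leq 4}|P_iP_j|\leq 4+4\sqrt{2},$$ where $|PQ|$ denotes the Euclidean distance, and the value $4+4\sqrt{2}$ is attained (e.g. by the four vertices of a square inscribed in the equator $\{z=0\}$). Thus the largest possible sum of the six pairwise distances between four points of $S^2_{\geq 0}$ is $4+4\sqrt{2}$. *)

From Stdlib Require Import Reals.
Open Scope R_scope.

Definition pt : Type := (R * R * R)%type.

Definition in_upper_hemisphere (p : pt) : Prop :=
  let '(x, y, z) := p in x ^ 2 + y ^ 2 + z ^ 2 = 1 /\ 0 <= z.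

Definition dist3 (p q : pt) : R :=
  let '(x1, y1, z1) := p in
  let '(x2, y2, z2) := q in
  sqrt ((x1 - x2) ^ 2 + (y1 - y2) ^ 2 + (z1 - z2) ^ 2).

Definition sum_pair_dists (p1 p2 p3 p4 : pt) : R :=
  dist3 p1 p2 + dist3 p1 p3 + dist3 p1 p4 +
  dist3 p2 p3 + dist3 p2 p4 + dist3 p3 p4.

From Stdlib Require Import Reals Lra Psatz.
Open Scope R_scope.

(* Put S = P1 + P2 + P3 + P4 and let A, B, C be the three vectors Pi + Pj - Pk - Pl
   attached to the splittings of {1,2,3,4} into two pairs, with squared norms t, a, b, c.
   The parallelogram law bounds each pair of opposite edges, e.g.
   |P1P2| + |P3P4| <= sqrt (b + c), while t + a + b + c = 16.
   Unit length gives S.A + B.C = 0 and its rotations, and nonnegative heights give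
   |height A| <= height S etc.; splitting every vector into horizontal and vertical parts
   and using that the squared cosines of the angles between three plane vectors add up
   to at least 3/4, one gets 3 (a - t)(b - t)(c - t) <= 5 t (a^2 + b^2 + c^2) + 20 t^2 (a + b + c).
   If one of a, b, c is at most (3 + 2 sqrt 2) t, tangent-line bounds for sqrt conclude.
   Otherwise that inequality forces the spread 384 t + sum (a - b)^2 >= 176 (checked by
   polynomial certificates), and then (sqrt (b + c) + sqrt (c + a) + sqrt (a + b))^2 <= 93.25,
   which is below (4 + 4 sqrt 2)^2. *)

Lemma sqrt2_bounds : 14142 / 10000 < sqrt 2 < 14143 / 10000.
Proof.
  pose proof (sqrt_sqrt 2 ltac:(lra)). pose proof (sqrt_pos 2).
  split; nra.
Qed.

Lemma sqrt_tangent (x m : R) : 0 <= x -> 2 * m * sqrt x <= x + m ^ 2.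
Proof.
  intros Hx. pose proof (sqrt_sqrt x Hx). pose proof (pow2_ge_0 (sqrt x - m)). nra.
Qed.

Lemma sqrt_add_le (x y s : R) :
  0 <= x -> 0 <= y -> 2 * (x + y) = s -> sqrt x + sqrt y <= sqrt s.
Proof.
  intros Hx Hy <-.
  pose proof (sqrt_sqrt x Hx). pose proof (sqrt_sqrt y Hy).
  pose proof (sqrt_pos x). pose proof (sqrt_pos y).
  rewrite <- (sqrt_square (sqrt x + sqrt y)) by lra.
  apply sqrt_le_1_alt. pose proof (pow2_ge_0 (sqrt x - sqrt y)). nra.
Qed.

Lemma sqrt_pair_sums_le_of_small (t a b c : R) :
  0 <= t -> 0 <= a -> 0 <= b -> 0 <= c -> a + b + c + t = 16 ->
  c <= (3 + 2 * sqrt 2) * t ->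
  sqrt (b + c) + sqrt (c + a) + sqrt (a + b) <= 4 + 4 * sqrt 2.
Proof.
  intros Ht Ha Hb Hc Hsum Hsmall.
  pose proof (sqrt_sqrt 2 ltac:(lra)). pose proof sqrt2_bounds.
  pose proof (sqrt_tangent (b + c) (2 * sqrt 2) ltac:(lra)).
  pose proof (sqrt_tangent (c + a) (2 * sqrt 2) ltac:(lra)).
  pose proof (sqrt_tangent (a + b) 4 ltac:(lra)).
  set (r := sqrt 2) in *. clearbody r.
  (* tangency at 2 r and 4, the edge and the diagonal of the inscribed square; the three
     bounds add up to the goal exactly when c (2 - r) <= t (2 + r), i.e. c <= (3 + 2 r) t *)
  assert (c * (2 - r) <= t * (2 + r)).
  { assert (c * (2 - r) <= (3 + 2 * r) * t * (2 - r)) by (apply Rmult_le_compat_r; lra). nra. }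
  apply Rmult_le_reg_l with (8 * r); nra.
Qed.

Lemma sq_sub_sq_le (x y : R) :
  0 <= x <= 4 -> 0 <= y <= 4 -> (x ^ 2 - y ^ 2) ^ 2 <= 64 * (x - y) ^ 2.
Proof.
  intros Hx Hy.
  replace ((x ^ 2 - y ^ 2) ^ 2) with ((x - y) ^ 2 * (x + y) ^ 2) by ring.
  rewrite (Rmult_comm 64). apply Rmult_le_compat_l; [apply pow2_ge_0 | nra].
Qed.

Lemma sqrt_pair_sums_le_of_spread (t a b c : R) :
  0 <= t -> 0 <= a -> 0 <= b -> 0 <= c -> a + b + c + t = 16 ->
  176 <= 384 * t + ((a - b) ^ 2 + (b - c) ^ 2 + (c - a) ^ 2) ->
  sqrt (b + c) + sqrt (c + a) + sqrt (a + b) <= 4 + 4 * sqrt 2.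
Proof.
  intros Ht Ha Hb Hc Hsum Hspread.
  pose proof (sqrt_sqrt 2 ltac:(lra)). pose proof sqrt2_bounds.
  pose proof (sqrt_sqrt (b + c) ltac:(lra)) as HX.
  pose proof (sqrt_sqrt (c + a) ltac:(lra)) as HY.
  pose proof (sqrt_sqrt (a + b) ltac:(lra)) as HZ.
  pose proof (sqrt_pos (b + c)). pose proof (sqrt_pos (c + a)). pose proof (sqrt_pos (a + b)).
  set (X := sqrt (b + c)) in *. set (Y := sqrt (c + a)) in *. set (Z := sqrt (a + b)) in *.
  clearbody X Y Z.
  assert (X <= 4) by nra. assert (Y <= 4) by nra. assert (Z <= 4) by nra.
  pose proof (sq_sub_sq_le Y X ltac:(lra) ltac:(lra)).
  pose proof (sq_sub_sq_le Z Y ltac:(lra) ltac:(lra)).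
  pose proof (sq_sub_sq_le X Z ltac:(lra) ltac:(lra)).
  (* the margin is thin: (4 + 4 sqrt 2)^2 = 48 + 32 sqrt 2 > 93.2544 *)
  assert (Hsq : (X + Y + Z) ^ 2 <= 93 + 1 / 4).
  { replace ((X + Y + Z) ^ 2)
      with (3 * (X * X + Y * Y + Z * Z) - ((X - Y) ^ 2 + (Y - Z) ^ 2 + (Z - X) ^ 2)) by ring.
    replace (Y ^ 2 - X ^ 2) with (a - b) in * by nra.
    replace (Z ^ 2 - Y ^ 2) with (b - c) in * by nra.
    replace (X ^ 2 - Z ^ 2) with (c - a) in * by nra.
    nra. }
  nra.
Qed.

Definition gram_gap (t a b c : R) : R :=
  3 * (a - t) * (b - t) * (c - t) - (5 * t * (a ^ 2 + b ^ 2 + c ^ 2) + 20 * t ^ 2 * (a + b + c)).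

Lemma gram_gap_rotate (t a b c : R) : gram_gap t a b c = gram_gap t b c a.
Proof. unfold gram_gap; ring. Qed.

Lemma gram_gap_balance (t a m d : R) :
  gram_gap t a (m - d) (m + d) = gram_gap t a m m - (3 * a + 7 * t) * d ^ 2.
Proof. unfold gram_gap; ring. Qed.

Ltac nonneg :=
  repeat (apply Rplus_le_le_0_compat || apply Rmult_le_pos || apply pow_le);
  try assumption; try lra.

Lemma Rle_of_sub_eq_nonneg (x y p : R) : y - x = p -> 0 <= p -> x <= y.
Proof. lra. Qed.

(* Handelman certificates: on each region below the difference is a polynomial
   with positive coefficients in linear forms l0, l1, l2 that are nonnegative there. *)
Lemma gram_gap_balanced_small (t a m : R) :
  0 <= t -> 29 * t <= 5 * a -> a <= 9 / 2 -> a + 2 * m + t = 16 ->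
  (3 * a + 7 * t) * (176 - 384 * t - 2 * (a - m) ^ 2) <= 6 * gram_gap t a m m.
Proof.
  intros Ht Hta Ha Hm. replace m with ((16 - t - a) / 2) by lra.
  set (l0 := 1 - 2 / 9 * a). set (l1 := 2 / 9 * a - 58 / 45 * t). set (l2 := 58 / 45 * t).
  assert (0 <= l0) by (unfold l0; lra).
  assert (0 <= l1) by (unfold l1; lra).
  assert (0 <= l2) by (unfold l2; lra).
  apply (Rle_of_sub_eq_nonneg _ _ (
      (81641763/97556)*l2^7 + (105892839/24389)*l1^1*l2^6 + (464956119/48778)*l1^2*l2^5
      + (1150354305/97556)*l1^3*l2^4 + (916260255/97556)*l1^4*l2^3 + (301239/58)*l1^5*l2^2
      + (55404/29)*l1^6*l2^1 + (1377/4)*l1^7 + (63789363/24389)*l0^1*l2^6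
      + (308667753/24389)*l0^1*l1^1*l2^5 + (712479645/24389)*l0^1*l1^2*l2^4
      + (1035930060/24389)*l0^1*l1^3*l2^3 + (33198255/841)*l0^1*l1^4*l2^2
      + (602883/29)*l0^1*l1^5*l2^1 + (4617)*l0^1*l1^6 + (121724937/48778)*l0^2*l2^5
      + (478660185/24389)*l0^2*l1^1*l2^4 + (3105077085/48778)*l0^2*l1^2*l2^3
      + (164802195/1682)*l0^2*l1^3*l2^2 + (2059425/29)*l0^2*l1^4*l2^1 + (39123/2)*l0^2*l1^5
      + (13765059/24389)*l0^3*l2^4 + (753530931/24389)*l0^3*l1^1*l2^3
      + (83416716/841)*l0^3*l1^2*l2^2 + (3126681/29)*l0^3*l1^3*l2^1 + (38961)*l0^3*l1^4
      + (31429539/97556)*l0^4*l2^3 + (30583332/841)*l0^4*l1^1*l2^2 + (2221263/29)*l0^4*l1^2*l2^1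
      + (162081/4)*l0^4*l1^3 + (737424/841)*l0^5*l2^2 + (618192/29)*l0^5*l1^1*l2^1
      + (21384)*l0^5*l1^2 + (11664/29)*l0^6*l2^1 + (4536)*l0^6*l1^1)).
  - unfold l0, l1, l2, gram_gap; field.
  - clearbody l0 l1 l2; nonneg.
Qed.

Lemma gram_gap_balanced_large (t a m : R) :
  0 <= t -> t <= 23 / 50 -> 9 / 2 <= a -> 3 * a + t <= 16 -> a + 2 * m + t = 16 ->
  (3 * a + 7 * t) * (m - a) ^ 2 < gram_gap t a m m.
Proof.
  intros Ht Ht' Ha Ha' Hm. replace m with ((16 - t - a) / 2) by lra.
  enough ((3 * a + 7 * t) * ((16 - t - a) / 2 - a) ^ 2 + 1
          <= gram_gap t a ((16 - t - a) / 2) ((16 - t - a) / 2)) by lra.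
  destruct (Rle_or_lt 0 (-27 / 5 + 6 / 5 * a - 204 / 115 * t)).
  - set (l0 := 32 / 5 - 6 / 5 * a - 2 / 5 * t).
    set (l1 := -27 / 5 + 6 / 5 * a - 204 / 115 * t) in *. set (l2 := 50 / 23 * t).
    assert (0 <= l0) by (unfold l0; lra).
    assert (0 <= l2) by (unfold l2; lra).
    apply (Rle_of_sub_eq_nonneg _ _ (
        (7944163/125000)*l2^3 + (385877/625)*l1^1*l2^2 + (75679/75)*l1^2*l2^1 + (4087/9)*l1^3
        + (385877/625)*l0^1*l2^2 + (151358/75)*l0^1*l1^1*l2^1 + (4087/3)*l0^1*l1^2
        + (96997/100)*l0^2*l2^1 + (1329)*l0^2*l1^1 + (1697/4)*l0^3)).
    + unfold l0, l1, l2, gram_gap; field.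
    + clearbody l0 l1 l2; nonneg.
  - set (l0 := 1 - 50 / 23 * t). set (l1 := -225 / 34 + 25 / 17 * a).
    set (l2 := 225 / 34 - 25 / 17 * a + 50 / 23 * t).
    assert (0 <= l0) by (unfold l0; lra).
    assert (0 <= l1) by (unfold l1; lra).
    assert (0 <= l2) by (unfold l2; lra).
    apply (Rle_of_sub_eq_nonneg _ _ (
        (4927003/125000)*l2^3 + (4115901/25000)*l1^1*l2^2 + (23832489/125000)*l1^2*l2^1
        + (7944163/125000)*l1^3 + (13459/25)*l0^1*l2^2 + (731889/625)*l0^1*l1^1*l2^1
        + (385877/625)*l0^1*l1^2 + (92407/100)*l0^2*l2^1 + (96997/100)*l0^2*l1^1 + (1697/4)*l0^3)).
    + unfold l0, l1, l2, gram_gap; field.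
    + clearbody l0 l1 l2; nonneg.
Qed.

Lemma spread_lower_of_min (t a b c : R) :
  0 <= t -> a + b + c + t = 16 -> 29 * t < 5 * a -> a <= b -> a <= c ->
  gram_gap t a b c <= 0 -> 176 <= 384 * t + ((a - b) ^ 2 + (b - c) ^ 2 + (c - a) ^ 2).
Proof.
  intros Ht Hsum Hta Hab Hac Hgap.
  set (m := (b + c) / 2) in *. set (d := (c - b) / 2) in *.
  assert (Hm : a + 2 * m + t = 16) by (unfold m; lra).
  assert (Hb : b = m - d) by (unfold m, d; lra).
  assert (Hc : c = m + d) by (unfold m, d; lra).
  clearbody m d. subst b c.
  rewrite gram_gap_balance in Hgap.
  replace ((a - (m - d)) ^ 2 + (m - d - (m + d)) ^ 2 + (m + d - a) ^ 2)
    with (2 * (a - m) ^ 2 + 6 * d ^ 2) by ring.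
  destruct (Rlt_or_le (384 * t + (2 * (a - m) ^ 2 + 6 * d ^ 2)) 176) as [Hlt|]; [exfalso|lra].
  assert (Hk : 0 < 3 * a + 7 * t) by lra.
  enough ((3 * a + 7 * t) * d ^ 2 < gram_gap t a m m) by lra.
  destruct (Rle_or_lt a (9 / 2)).
  - pose proof (gram_gap_balanced_small t a m Ht ltac:(lra) ltac:(lra) Hm).
    assert (0 < (3 * a + 7 * t) * (176 - 384 * t - 2 * (a - m) ^ 2 - 6 * d ^ 2))
      by (apply Rmult_lt_0_compat; lra).
    lra.
  - assert (t <= 23 / 50) by nra.
    pose proof (gram_gap_balanced_large t a m Ht ltac:(lra) ltac:(lra) ltac:(lra) Hm).
    (* |d| <= m - a because a is the smallest of a, m - d, m + d *)
    assert (d ^ 2 <= (m - a) ^ 2) by nra.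
    assert ((3 * a + 7 * t) * d ^ 2 <= (3 * a + 7 * t) * (m - a) ^ 2)
      by (apply Rmult_le_compat_l; lra).
    lra.
Qed.

Lemma spread_lower (t a b c : R) :
  0 <= t -> a + b + c + t = 16 -> 29 * t < 5 * a -> 29 * t < 5 * b -> 29 * t < 5 * c ->
  gram_gap t a b c <= 0 -> 176 <= 384 * t + ((a - b) ^ 2 + (b - c) ^ 2 + (c - a) ^ 2).
Proof.
  intros Ht Hsum Ha Hb Hc Hgap.
  pose proof (gram_gap_rotate t a b c) as Rot1.
  pose proof (gram_gap_rotate t b c a) as Rot2.
  destruct (Rle_or_lt a b); destruct (Rle_or_lt b c); destruct (Rle_or_lt c a).
  all: first
    [ apply (spread_lower_of_min t a b c); lra
    | pose proof (spread_lower_of_min t b c a); lra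
    | pose proof (spread_lower_of_min t c a b); lra ].
Qed.

Lemma sqrt_pair_sums_le (t a b c : R) :
  0 <= t -> 0 <= a -> 0 <= b -> 0 <= c -> a + b + c + t = 16 ->
  (t <= a -> t <= b -> t <= c -> gram_gap t a b c <= 0) ->
  sqrt (b + c) + sqrt (c + a) + sqrt (a + b) <= 4 + 4 * sqrt 2.
Proof.
  intros Ht Ha Hb Hc Hsum Hgap.
  pose proof sqrt2_bounds.
  destruct (Rle_or_lt c ((3 + 2 * sqrt 2) * t)).
  { now apply (sqrt_pair_sums_le_of_small t a b c). }
  destruct (Rle_or_lt a ((3 + 2 * sqrt 2) * t)).
  { pose proof (sqrt_pair_sums_le_of_small t b c a); lra. }
  destruct (Rle_or_lt b ((3 + 2 * sqrt 2) * t)).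
  { pose proof (sqrt_pair_sums_le_of_small t c a b); lra. }
  assert (29 * t <= 5 * ((3 + 2 * sqrt 2) * t)) by nra.
  assert (t <= (3 + 2 * sqrt 2) * t) by nra.
  apply (sqrt_pair_sums_le_of_spread t); try assumption.
  apply spread_lower; lra.
Qed.

Definition vadd (p q : pt) : pt :=
  let '(x1, y1, z1) := p in let '(x2, y2, z2) := q in (x1 + x2, y1 + y2, z1 + z2).

Definition vsub (p q : pt) : pt :=
  let '(x1, y1, z1) := p in let '(x2, y2, z2) := q in (x1 - x2, y1 - y2, z1 - z2).

Definition dot (p q : pt) : R :=
  let '(x1, y1, z1) := p in let '(x2, y2, z2) := q in x1 * x2 + y1 * y2 + z1 * z2.

Definition nrm2 (p : pt) : R := dot p p.

Definition height (p : pt) : R := let '(_, _, z) := p in z.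

Definition hdot (p q : pt) : R :=
  let '(x1, y1, _) := p in let '(x2, y2, _) := q in x1 * x2 + y1 * y2.

Definition hnrm2 (p : pt) : R := hdot p p.

Lemma dot_hdot (p q : pt) : dot p q = hdot p q + height p * height q.
Proof. destruct p as [[x1 y1] z1], q as [[x2 y2] z2]; simpl; ring. Qed.

Lemma hnrm2_nonneg (p : pt) : 0 <= hnrm2 p.
Proof. destruct p as [[x y] z]; simpl; nra. Qed.

Lemma nrm2_hnrm2 (p : pt) : nrm2 p = hnrm2 p + height p ^ 2.
Proof. unfold nrm2, hnrm2; rewrite dot_hdot; ring. Qed.

Lemma nrm2_nonneg (p : pt) : 0 <= nrm2 p.
Proof. rewrite nrm2_hnrm2; pose proof (hnrm2_nonneg p); pose proof (pow2_ge_0 (height p)); lra. Qed.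

Lemma dot_sq_le (p q : pt) : dot p q ^ 2 <= nrm2 p * nrm2 q.
Proof.
  destruct p as [[x1 y1] z1], q as [[x2 y2] z2]; unfold nrm2; simpl.
  pose proof (pow2_ge_0 (x1 * y2 - x2 * y1)).
  pose proof (pow2_ge_0 (x1 * z2 - x2 * z1)).
  pose proof (pow2_ge_0 (y1 * z2 - y2 * z1)).
  nra.
Qed.

Lemma planar_cos2_sum (u v w : pt) :
  3 * (hnrm2 u * hnrm2 v * hnrm2 w)
  <= 4 * (hdot v w ^ 2 * hnrm2 u + hdot w u ^ 2 * hnrm2 v + hdot u v ^ 2 * hnrm2 w).
Proof.
  destruct u as [[u1 u2] u3], v as [[v1 v2] v3], w as [[w1 w2] w3]; unfold hnrm2; simpl.
  set (U := u1 * u1 + u2 * u2). set (V := v1 * v1 + v2 * v2). set (W := w1 * w1 + w2 * w2).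
  set (E := 4 * ((v1 * w1 + v2 * w2) ^ 2 * U + (w1 * u1 + w2 * u2) ^ 2 * V
                 + (u1 * v1 + u2 * v2) ^ 2 * W) - 3 * (U * V * W)).
  enough (0 <= E) by (unfold E in *; lra).
  (* [(u1^2 - u2^2, 2 u1 u2)] is the complex square of [u]: the identity reads
     [E * U V W = |u^2 V W + v^2 U W + w^2 U V|^2] *)
  assert (Id : E * (U * V * W)
               = ((u1 * u1 - u2 * u2) * V * W + (v1 * v1 - v2 * v2) * U * W
                  + (w1 * w1 - w2 * w2) * U * V) ^ 2
                 + (2 * u1 * u2 * V * W + 2 * v1 * v2 * U * W + 2 * w1 * w2 * U * V) ^ 2)
    by (unfold E, U, V, W; ring).
  assert (0 <= U) by (unfold U; nra). assert (0 <= V) by (unfold V; nra).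
  assert (0 <= W) by (unfold W; nra).
  destruct (Req_dec U 0) as [HU|HU].
  { assert (u1 = 0 /\ u2 = 0) as [-> ->] by (unfold U in HU; nra).
    unfold E, U; lra. }
  destruct (Req_dec V 0) as [HV|HV].
  { assert (v1 = 0 /\ v2 = 0) as [-> ->] by (unfold V in HV; nra).
    unfold E, V; lra. }
  destruct (Req_dec W 0) as [HW|HW].
  { assert (w1 = 0 /\ w2 = 0) as [-> ->] by (unfold W in HW; nra).
    unfold E, W; lra. }
  assert (0 < U * V * W) by (repeat apply Rmult_lt_0_compat; lra).
  pose proof (pow2_ge_0 ((u1 * u1 - u2 * u2) * V * W + (v1 * v1 - v2 * v2) * U * W
                         + (w1 * w1 - w2 * w2) * U * V)).
  pose proof (pow2_ge_0 (2 * u1 * u2 * V * W + 2 * v1 * v2 * U * W + 2 * w1 * w2 * U * V)).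
  nra.
Qed.

Lemma hdot_sq_le (S A B C : pt) :
  dot S A + dot B C = 0 -> height B ^ 2 <= height S ^ 2 -> height C ^ 2 <= height S ^ 2 ->
  hdot B C ^ 2 <= 5 / 4 * (nrm2 S * nrm2 A) + 5 * nrm2 S ^ 2.
Proof.
  intros Hrel HB HC.
  rewrite (dot_hdot B C) in Hrel.
  pose proof (dot_sq_le S A).
  assert (Hz : (height B * height C) ^ 2 <= nrm2 S ^ 2).
  { pose proof (nrm2_hnrm2 S). pose proof (hnrm2_nonneg S).
    rewrite Rpow_mult_distr.
    apply Rle_trans with (height S ^ 2 * height S ^ 2).
    - apply Rmult_le_compat; auto using pow2_ge_0.
    - nra. }
  (* [hdot B C = - dot S A - zB zC], and [(x + y)^2 <= 5/4 x^2 + 5 y^2] *)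
  pose proof (pow2_ge_0 (dot S A / 2 - 2 * (height B * height C))).
  replace (hdot B C) with (- dot S A - height B * height C) by lra.
  nra.
Qed.

Lemma gram_gap_nonpos (S A B C : pt) :
  dot S A + dot B C = 0 -> dot S B + dot C A = 0 -> dot S C + dot A B = 0 ->
  height A ^ 2 <= height S ^ 2 -> height B ^ 2 <= height S ^ 2 ->
  height C ^ 2 <= height S ^ 2 ->
  nrm2 S <= nrm2 A -> nrm2 S <= nrm2 B -> nrm2 S <= nrm2 C ->
  gram_gap (nrm2 S) (nrm2 A) (nrm2 B) (nrm2 C) <= 0.
Proof.
  intros RA RB RC zA zB zC tA tB tC.
  pose proof (hdot_sq_le S A B C RA zB zC).
  pose proof (hdot_sq_le S B C A RB zC zA).
  pose proof (hdot_sq_le S C A B RC zA zB).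
  pose proof (planar_cos2_sum A B C).
  pose proof (nrm2_hnrm2 S). pose proof (nrm2_hnrm2 A).
  pose proof (nrm2_hnrm2 B). pose proof (nrm2_hnrm2 C).
  pose proof (hnrm2_nonneg S). pose proof (hnrm2_nonneg A).
  pose proof (hnrm2_nonneg B). pose proof (hnrm2_nonneg C).
  pose proof (pow2_ge_0 (height A)). pose proof (pow2_ge_0 (height B)).
  pose proof (pow2_ge_0 (height C)).
  set (t := nrm2 S) in *. set (a := nrm2 A) in *. set (b := nrm2 B) in *. set (c := nrm2 C) in *.
  set (hA := hnrm2 A) in *. set (hB := hnrm2 B) in *. set (hC := hnrm2 C) in *.
  assert (Hprod : (a - t) * (b - t) * (c - t) <= hA * hB * hC)
    by (repeat apply Rmult_le_compat; nra).
  assert (hdot B C ^ 2 * hA <= (5 / 4 * (t * a) + 5 * t ^ 2) * a)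
    by (apply Rmult_le_compat; nra).
  assert (hdot C A ^ 2 * hB <= (5 / 4 * (t * b) + 5 * t ^ 2) * b)
    by (apply Rmult_le_compat; nra).
  assert (hdot A B ^ 2 * hC <= (5 / 4 * (t * c) + 5 * t ^ 2) * c)
    by (apply Rmult_le_compat; nra).
  unfold gram_gap. lra.
Qed.

Definition quad_sum (p1 p2 p3 p4 : pt) : pt := vadd (vadd p1 p2) (vadd p3 p4).

Definition pair_diff (p1 p2 p3 p4 : pt) : pt := vsub (vadd p1 p2) (vadd p3 p4).

Lemma sum_pair_dists_le (p1 p2 p3 p4 : pt) :
  let a := nrm2 (pair_diff p1 p2 p3 p4) in
  let b := nrm2 (pair_diff p1 p3 p2 p4) in
  let c := nrm2 (pair_diff p1 p4 p2 p3) in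
  sum_pair_dists p1 p2 p3 p4 <= sqrt (b + c) + sqrt (c + a) + sqrt (a + b).
Proof.
  intros a b c. unfold sum_pair_dists.
  apply Rle_trans with ((dist3 p1 p2 + dist3 p3 p4) + (dist3 p1 p3 + dist3 p2 p4)
                        + (dist3 p1 p4 + dist3 p2 p3)); [lra|].
  destruct p1 as [[x1 y1] z1], p2 as [[x2 y2] z2], p3 as [[x3 y3] z3], p4 as [[x4 y4] z4].
  (* parallelogram law: [2 (|P1P2|^2 + |P3P4|^2) = b + c], and likewise for the other pairings *)
  unfold dist3.
  repeat apply Rplus_le_compat; apply sqrt_add_le.
  all: first [ repeat apply Rplus_le_le_0_compat; apply pow2_ge_0
             | unfold a, b, c, nrm2; simpl; ring ].
Qed.

Lemma quad_norms_sum_hemisphere (p1 p2 p3 p4 : pt) :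
  in_upper_hemisphere p1 -> in_upper_hemisphere p2 ->
  in_upper_hemisphere p3 -> in_upper_hemisphere p4 ->
  nrm2 (pair_diff p1 p2 p3 p4) + nrm2 (pair_diff p1 p3 p2 p4) + nrm2 (pair_diff p1 p4 p2 p3)
  + nrm2 (quad_sum p1 p2 p3 p4) = 16.
Proof.
  destruct p1 as [[x1 y1] z1], p2 as [[x2 y2] z2], p3 as [[x3 y3] z3], p4 as [[x4 y4] z4].
  intros [h1 _] [h2 _] [h3 _] [h4 _]. unfold nrm2; simpl. lra.
Qed.

Lemma hemisphere_gram_gap_nonpos (p1 p2 p3 p4 : pt) :
  in_upper_hemisphere p1 -> in_upper_hemisphere p2 ->
  in_upper_hemisphere p3 -> in_upper_hemisphere p4 ->
  let t := nrm2 (quad_sum p1 p2 p3 p4) in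
  let a := nrm2 (pair_diff p1 p2 p3 p4) in
  let b := nrm2 (pair_diff p1 p3 p2 p4) in
  let c := nrm2 (pair_diff p1 p4 p2 p3) in
  t <= a -> t <= b -> t <= c -> gram_gap t a b c <= 0.
Proof.
  destruct p1 as [[x1 y1] z1], p2 as [[x2 y2] z2], p3 as [[x3 y3] z3], p4 as [[x4 y4] z4].
  intros [h1 hz1] [h2 hz2] [h3 hz3] [h4 hz4] t a b c.
  (* unit length makes [dot S A + dot B C] vanish; nonnegative heights give
     [|height A| <= height S] *)
  apply gram_gap_nonpos; simpl; nra.
Qed.

Theorem mainTheorem1 :
  (forall p1 p2 p3 p4 : pt,
      in_upper_hemisphere p1 -> in_upper_hemisphere p2 ->
      in_upper_hemisphere p3 -> in_upper_hemisphere p4 ->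
      sum_pair_dists p1 p2 p3 p4 <= 4 + 4 * sqrt 2) /\
  (exists p1 p2 p3 p4 : pt,
      in_upper_hemisphere p1 /\ in_upper_hemisphere p2 /\
      in_upper_hemisphere p3 /\ in_upper_hemisphere p4 /\
      sum_pair_dists p1 p2 p3 p4 = 4 + 4 * sqrt 2).
Proof.
  split.
  - intros p1 p2 p3 p4 H1 H2 H3 H4.
    eapply Rle_trans; [apply sum_pair_dists_le|].
    apply (sqrt_pair_sums_le (nrm2 (quad_sum p1 p2 p3 p4))); try apply nrm2_nonneg.
    + pose proof (quad_norms_sum_hemisphere p1 p2 p3 p4 H1 H2 H3 H4); lra.
    + exact (hemisphere_gram_gap_nonpos p1 p2 p3 p4 H1 H2 H3 H4).
  - exists (1, 0, 0), (0, 1, 0), (-1, 0, 0), (0, -1, 0).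
    unfold in_upper_hemisphere, sum_pair_dists, dist3.
    repeat split; try lra.
    repeat match goal with
           | |- context [sqrt ?e] => progress replace e with 2 by ring
           | |- context [sqrt ?e] => progress replace e with (2 * 2) by ring
           end.
    rewrite sqrt_square by lra. ring.
Qed.
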